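(* Let $X$ be a real Banach space and $T:X\rightrightarrows X^*$ a maximal monotone operator. Then $$D(\mathcal{J}\delta_T)\subseteq\{(x,x^* )\in X\times X^*\;|\;\langle x,x^*\rangle\leq 0\},$$ i.e., every $(x,x^* )\in X\times X^*$ with $\sup_{(y,y^* )\in T}\big(\langle y,x^*\rangle+\langle x,y^*\rangle\big)<\infty$ satisfies $\langle x,x^*\rangle\leq0$.
   Context: $X$ is identified with its image in $X^{**}$. An operator $T:X\rightrightarrows X^*$ is a subset of $X\times X^*$; it is monotone if $\langle x-y,x^*-y^*\rangle\geq0$ for all $(x,x^* ),(y,y^* )\in T$, and maximal monotone if it is monotone and not properly contained in another monotone operator. $\delta_T$ is the indicator function of $T$ (0 on $T$, $+\infty$ elsewhere). For $h:X\times X^*\to\mathbb{R}\cup\{\pm\infty\}$, $h^*(x^*,x^{**})=\sup_{(y,y^* )}\langle y,x^*\rangle+\langle x^{**},y^*\rangle-h(y,y^* )$ on $X^*\times X^{**}$, and $(\mathcal{J}h)(x,x^* )=h^*(x^*,x)$; $D(f)=\{z\;|\;f(z)<\infty\}$. *)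

From HB Require Import structures.
From mathcomp Require Import all_boot all_order all_algebra.
From mathcomp Require Import all_classical all_reals all_analysis.
Set Implicit Arguments. Unset Strict Implicit. Unset Printing Implicit Defensive.
Import Order.TTheory GRing.Theory Num.Theory.
Import numFieldNormedType.Exports.
Local Open Scope classical_set_scope.
Local Open Scope ring_scope.

Record dual (R : realType) (X : normedModType R) := Dual {
  dual_fun :> X -> R;
  dual_linear : linear dual_fun;
  dual_cont : continuous dual_fun }.

Definition pairing (R : realType) (X : normedModType R) (x : X) (xs : dual X) : R :=
  dual_fun xs x.

Definition monotone_op (R : realType) (X : normedModType R) (T : set (X * dual X)) :=
  forall p q, T p -> T q ->
    0 <= pairing (p.1 - q.1) p.2 - pairing (p.1 - q.1) q.2.

Definition maximal_monotone (R : realType) (X : normedModType R) (T : set (X * dual X)) :=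
  monotone_op T /\
  forall S : set (X * dual X), monotone_op S -> T `<=` S -> S = T.

Definition in_dom_J_delta (R : realType) (X : normedModType R) (T : set (X * dual X))
  (x : X) (xs : dual X) :=
  exists M : R, forall q, T q -> pairing q.1 xs + pairing x q.2 <= M.

From mathcomp Require Import all_boot all_order all_algebra.
From mathcomp Require Import all_classical all_reals all_analysis.
From mathcomp Require Import ring lra.
Import numFieldNormedType.Exports.
Import Order.TTheory GRing.Theory Num.Theory.
Set Implicit Arguments. Unset Strict Implicit. Unset Printing Implicit Defensive.
Local Open Scope classical_set_scope.
Local Open Scope ring_scope.

(* Fix (a, a* ) in T and t > 0. The point (a + t x, a* + t x* ) is either
   monotonically related to T, hence in T by maximality, or it is not, and
   then monotonicity of T at (a, a* ) yields (y, y* ) in T witnessing the same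
   bound: in both cases the supremum defining J delta_T at (x, x* ) is at
   least <a, x*> + <x, a*> + t <x, x*>. Letting t go to infinity forces
   <x, x*> <= 0. *)

Section DualSpace.
Variables (R : realType) (X : normedModType R).

Lemma dualD (f : dual X) u v : f (u + v) = f u + f v.
Proof. by have := dual_linear f 1 u v; rewrite !scale1r. Qed.

Lemma dual0 (f : dual X) : f 0 = 0.
Proof. by apply: (addrI (f 0)); rewrite -dualD !addr0. Qed.

Lemma dualZ (f : dual X) (c : R) u : f (c *: u) = c * f u.
Proof. by have := dual_linear f c u 0; rewrite !addr0 dual0 addr0. Qed.

Lemma dualN (f : dual X) u : f (- u) = - f u.
Proof. by rewrite -scaleN1r dualZ mulN1r. Qed.

Lemma dualB (f : dual X) u v : f (u - v) = f u - f v.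
Proof. by rewrite dualD dualN. Qed.

Lemma cst0_linear : linear (fun _ : X => 0 : R).
Proof. by move=> c u v; rewrite scaler0 addr0. Qed.

Definition dual_zero : dual X := Dual cst0_linear (@cst_continuous _ _ (0 : R)).

Lemma dual_shift_linear (f g : dual X) (t : R) : linear (fun z => f z + t * g z).
Proof. by move=> c u v; rewrite !dualD !dualZ /GRing.scale /=; ring. Qed.

Lemma dual_shift_continuous (f g : dual X) (t : R) : continuous (fun z => f z + t * g z).
Proof.
move=> z; have cst_t : {for z, continuous (fun _ : X => t)} by exact: cst_continuous.
by have := continuousD (@dual_cont _ _ f z) (continuousM cst_t (@dual_cont _ _ g z)).
Qed.

Definition dual_shift (f g : dual X) (t : R) : dual X :=
  Dual (@dual_shift_linear f g t) (@dual_shift_continuous f g t).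

End DualSpace.

Section MaximalMonotone.
Variables (R : realType) (X : normedModType R).
Implicit Types (T : set (X * dual X)) (p q : X * dual X).

(* <p.1 - q.1, p.2 - q.2>, written without subtracting functionals *)
Definition mono_gap p q := pairing (p.1 - q.1) p.2 - pairing (p.1 - q.1) q.2.

Lemma mono_gapC p q : mono_gap p q = mono_gap q p.
Proof. by rewrite /mono_gap /pairing !dualB; ring. Qed.

Definition mono_related T p := forall q, T q -> 0 <= mono_gap q p.

Lemma maximal_monotone_related T p :
  maximal_monotone T -> mono_related T p -> T p.
Proof.
move=> [monoT maxT] relp.
suff <- : T `|` [set p] = T by right.
apply: maxT => [q1 q2 [T1|->] [T2|->]|q Tq]; last by left.
- exact: monoT.
- exact: relp.
- by rewrite -/(mono_gap _ _) mono_gapC; exact: relp.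
- by rewrite subrr.
Qed.

Lemma maximal_monotone_neq0 T : maximal_monotone T -> T !=set0.
Proof.
move=> maxT; apply/set0P/eqP => T0.
have : T (0, dual_zero X) by apply: (maximal_monotone_related maxT) => q; rewrite T0.
by rewrite T0.
Qed.

Lemma maximal_monotone_shift_bound T a as_ (x : X) (xs : dual X) (t : R) :
  maximal_monotone T -> T (a, as_) -> 0 < t -> 0 <= pairing x xs ->
  exists2 q, T q &
    pairing a xs + pairing x as_ + t * pairing x xs <= pairing q.1 xs + pairing x q.2.
Proof.
rewrite /pairing => maxT Ta t_gt0 p_ge0.
pose p0 := (a + t *: x, dual_shift as_ xs t).
have [rel0|] := pselect (mono_related T p0).
  exists p0; first exact: maximal_monotone_related.
  have := mulr_ge0 (ltW t_gt0) p_ge0; rewrite /p0 /= !dualD !dualZ; lra.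
move=> /existsNP[[y ys] /not_implyP[Ty /negP]].
rewrite -ltNge => gap_lt0; exists (y, ys) => //=.
have := maxT.1 _ _ Ty Ta; rewrite /mono_gap /pairing /= !(dualN, dualD).
move: gap_lt0; rewrite /mono_gap /pairing /p0 /= !(dualN, dualD, dualZ) => gap_lt0 gap_ge0.
rewrite -(ler_pM2l t_gt0); lra.
Qed.

End MaximalMonotone.

Theorem theorem4p6 (R : realType) (X : completeNormedModType R)
  (T : set (X * dual X)) :
  maximal_monotone T ->
  forall (x : X) (xs : dual X), in_dom_J_delta T x xs -> pairing x xs <= 0.
Proof.
move=> maxT x xs [M boundM]; rewrite leNgt; apply/negP => p_gt0.
have [[a as_] Ta] := maximal_monotone_neq0 maxT.
set c := pairing a xs + pairing x as_.
set t := (`|M - c| + 1) / pairing x xs.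
have t_gt0 : 0 < t by rewrite divr_gt0 // ltr_wpDl.
have tp : t * pairing x xs = `|M - c| + 1 by rewrite mulfVK // gt_eqF.
have [q Tq] := maximal_monotone_shift_bound maxT Ta t_gt0 (ltW p_gt0).
have := boundM q Tq; have := ler_norm (M - c); rewrite -/c tp; clearbody t c; lra.
Qed.
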